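(* Let $\alpha>0$ and consider the nonlinear program described in the context, and let $X$ be an open set containing $\mathcal{C}$ on which $\mathcal{G}_\alpha$ is well defined. Let $x\in X$ with $\Lambda_\alpha(x)\ne\emptyset$. Then for every $(u,v)\in\Lambda_\alpha(x)$, $\nabla f(x)^\top\mathcal{G}_\alpha(x)=-\|\mathcal{G}_\alpha(x)\|^2+\alpha u^\top g(x)+\alpha v^\top h(x)$. Moreover, if $x\in\mathcal{C}$ and MFCQ holds at $x$, then $\nabla f(x)^\top\mathcal{G}_\alpha(x)\le0$, with equality if and only if $x\in X_{KKT}$.
   Context: Let $f:\mathbb{R}^n\to\mathbb{R}$, $g:\mathbb{R}^n\to\mathbb{R}^m$, $h:\mathbb{R}^n\to\mathbb{R}^k$ be continuously differentiable; program: minimize $f(x)$ subject to $g(x)\le0$, $h(x)=0$; feasible set $\mathcal{C}$; $I_0(x)=\{i:g_i(x)=0\}$. MFCQ at $x$: $\{\nabla h_j(x)\}_{j=1}^k$ linearly independent and some $\xi$ has $\nabla h_j(x)^\top\xi=0$ for all $j$ and $\nabla g_i(x)^\top\xi<0$ for $i\in I_0(x)$. $X_{KKT}$ is the set of $x^*$ admitting $u^*\in\mathbb{R}^m,v^*\in\mathbb{R}^k$ with $\nabla f(x^* )+\frac{\partial g}{\partial x}(x^* )^\top u^*+\frac{\partial h}{\partial x}(x^* )^\top v^*=0$, $g(x^* )\le0$, $h(x^* )=0$, $u^*\ge0$, $(u^* )^\top g(x^* )=0$. With $G=\frac{\partial g}{\partial x}(x)$, $H=\frac{\partial h}{\partial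 x}(x)$: $\mathcal{G}_\alpha(x)$ is the unique minimizer over $\xi$ of $\frac12\|\xi+\nabla f(x)\|^2$ subject to $G\xi\le-\alpha g(x)$, $H\xi=-\alpha h(x)$; $\Lambda_\alpha(x)$ is the set of $(u,v)\in\mathbb{R}^m_{\ge0}\times\mathbb{R}^k$ for which some $\xi$ satisfies $\xi+\nabla f(x)+G^\top u+H^\top v=0$, $G\xi+\alpha g(x)\le0$, $H\xi+\alpha h(x)=0$, $u\ge0$, $u^\top(G\xi+\alpha g(x))=0$. The quantity $\nabla f(x)^\top\mathcal{G}_\alpha(x)$ is the (upper-right Dini) derivative of $f$ along the safe gradient flow $\dot x=\mathcal{G}_\alpha(x)$. *)

From HB Require Import structures.
From mathcomp Require Import all_boot all_order all_algebra.
From mathcomp Require Import all_classical all_reals all_analysis.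
Set Implicit Arguments. Unset Strict Implicit. Unset Printing Implicit Defensive.
Import Order.TTheory GRing.Theory Num.Theory.
Import numFieldNormedType.Exports.
Local Open Scope classical_set_scope.
Local Open Scope ring_scope.

Section Defs.
Variables (R : realType) (n m k : nat).
Notation V := 'rV[R]_n.

Definition dotv (u w : V) : R := \sum_(j < n) u 0 j * w 0 j.

Definition grad (f : V -> R) (x : V) : V := \row_(j < n) ('d f x (delta_mx 0 j : V)).

Definition C1 (f : V -> R) : Prop :=
  (forall x, differentiable f x) /\
  (forall j : 'I_n, continuous (fun x => 'd f x (delta_mx 0 j : V))).

Variables (f : V -> R) (g : 'I_m -> V -> R) (h : 'I_k -> V -> R).

Definition feasC (x : V) : Prop :=
  (forall i, g i x <= 0) /\ (forall j, h j x = 0).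

Definition MFCQ (x : V) : Prop :=
  (forall c : 'I_k -> R, \sum_(j < k) c j *: grad (h j) x = 0 -> forall j, c j = 0) /\
  (exists xi : V, (forall j, dotv (grad (h j) x) xi = 0) /\
                  (forall i, g i x = 0 -> dotv (grad (g i) x) xi < 0)).

Definition KKT (x : V) : Prop :=
  exists (u : 'I_m -> R) (v : 'I_k -> R),
    grad f x + \sum_(i < m) u i *: grad (g i) x + \sum_(j < k) v j *: grad (h j) x = 0 /\
    feasC x /\ (forall i, 0 <= u i) /\ \sum_(i < m) u i * g i x = 0.

Definition qp_feas (alpha : R) (x xi : V) : Prop :=
  (forall i, dotv (grad (g i) x) xi <= - alpha * g i x) /\
  (forall j, dotv (grad (h j) x) xi = - alpha * h j x).

Definition qp_obj (x xi : V) : R :=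
  2^-1 * dotv (xi + grad f x) (xi + grad f x).

(* xi is the (unique) minimizer of the QP, i.e. xi = G_alpha(x) *)
Definition is_Galpha (alpha : R) (x xi : V) : Prop :=
  qp_feas alpha x xi /\ forall z, qp_feas alpha x z -> qp_obj x xi <= qp_obj x z.

Definition Galpha_welldef (alpha : R) (x : V) : Prop :=
  exists! xi, is_Galpha alpha x xi.

Definition Lambda (alpha : R) (x : V) (u : 'I_m -> R) (v : 'I_k -> R) : Prop :=
  (forall i, 0 <= u i) /\
  exists xi : V,
    xi + grad f x + \sum_(i < m) u i *: grad (g i) x + \sum_(j < k) v j *: grad (h j) x = 0 /\
    qp_feas alpha x xi /\
    \sum_(i < m) u i * (dotv (grad (g i) x) xi + alpha * g i x) = 0.

End Defs.

(** Λ_α(x) is exactly the set of KKT multipliers of the convex quadratic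
    program defining G_α(x), i.e. of the projection of -∇f(x) onto the
    polyhedron {ξ | Gξ ≤ -αg(x), Hξ = -αh(x)}.  For a KKT pair (ξ, u, v) of
    such a projection, every feasible z satisfies
    |z + ∇f|² ≥ |ξ + ∇f|² + |z - ξ|², so ξ is the minimizer G_α(x).
    Pairing the stationarity condition ∇f = -(ξ + Gᵀu + Hᵀv) with ξ and using
    complementarity gives the formula for ∇f(x)ᵀG_α(x).  On the feasible set
    both multiplier terms are ≤ 0, so the derivative is ≤ 0, and it vanishes
    iff ξ = 0 and uᵀg(x) = 0, which is the KKT system of the original program;
    conversely, KKT multipliers of the program make ξ = 0 a KKT point of the
    quadratic program, hence G_α(x) = 0. *)
From HB Require Import structures.
From mathcomp Require Import all_boot all_order all_algebra.
From mathcomp Require Import all_classical all_reals all_analysis.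
From mathcomp Require Import ring lra.
Set Implicit Arguments. Unset Strict Implicit. Unset Printing Implicit Defensive.
Import Order.TTheory GRing.Theory Num.Theory.
Import numFieldNormedType.Exports.
Local Open Scope classical_set_scope.
Local Open Scope ring_scope.

Section DotProduct.
Variables (R : realType) (n : nat).
Implicit Types (u w z : 'rV[R]_n).

Lemma dotvC u w : dotv u w = dotv w u.
Proof. by apply: eq_bigr => j _; rewrite mulrC. Qed.

Lemma dotvDl u w z : dotv (u + w) z = dotv u z + dotv w z.
Proof. by rewrite /dotv -big_split; apply: eq_bigr => j _; rewrite mxE mulrDl. Qed.

Lemma dotvNl u z : dotv (- u) z = - dotv u z.
Proof. by rewrite /dotv -sumrN; apply: eq_bigr => j _; rewrite mxE mulNr. Qed.

Lemma dotvBl u w z : dotv (u - w) z = dotv u z - dotv w z.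
Proof. by rewrite dotvDl dotvNl. Qed.

Lemma dotvDr u w z : dotv z (u + w) = dotv z u + dotv z w.
Proof. by rewrite dotvC dotvDl !(dotvC z). Qed.

Lemma dotv0r z : dotv z 0 = 0.
Proof. by rewrite /dotv big1 // => j _; rewrite mxE mulr0. Qed.

Lemma dotv_sumZl p (c : 'I_p -> R) (w : 'I_p -> 'rV[R]_n) z :
  dotv (\sum_(i < p) c i *: w i) z = \sum_(i < p) c i * dotv (w i) z.
Proof.
rewrite /dotv; under eq_bigr => j _ do rewrite summxE mulr_suml.
rewrite exchange_big; apply: eq_bigr => i _.
by rewrite mulr_sumr; apply: eq_bigr => j _; rewrite !mxE mulrA.
Qed.

Lemma dotv_sqrD u w : dotv (u + w) (u + w) = dotv u u + 2 * dotv w u + dotv w w.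
Proof. by rewrite dotvDl !dotvDr (dotvC u w); ring. Qed.

Lemma dotv_ge0 u : 0 <= dotv u u.
Proof. by apply: sumr_ge0 => j _; rewrite -expr2 sqr_ge0. Qed.

Lemma dotv_eq0 u : dotv u u = 0 -> u = 0.
Proof.
move=> uu0; apply/rowP => j; rewrite mxE.
have /eqP : u 0 j * u 0 j = 0.
  by apply: (psumr_eq0P _ uu0) => // i _; rewrite -expr2 sqr_ge0.
by rewrite mulf_eq0 orbb => /eqP.
Qed.

End DotProduct.

Section PolyhedralProjection.
Variables (R : realType) (n p q : nat).
Variables (a : 'rV[R]_n) (A : 'I_p -> 'rV[R]_n) (b : 'I_p -> R).
Variables (B : 'I_q -> 'rV[R]_n) (c : 'I_q -> R).

Definition lin_feas (z : 'rV[R]_n) : Prop :=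
  (forall i, dotv (A i) z <= b i) /\ (forall j, dotv (B j) z = c j).

(* KKT conditions of minimizing |ξ + a|²/2 subject to [lin_feas ξ]. *)
Definition qp_kkt (xi : 'rV[R]_n) (u : 'I_p -> R) (v : 'I_q -> R) : Prop :=
  [/\ xi + a + \sum_(i < p) u i *: A i + \sum_(j < q) v j *: B j = 0,
      forall i, 0 <= u i, lin_feas xi
    & \sum_(i < p) u i * (dotv (A i) xi - b i) = 0].

Lemma qp_kkt_sqnorm_ge xi u v z : qp_kkt xi u v -> lin_feas z ->
  dotv (xi + a) (xi + a) + dotv (z - xi) (z - xi) <= dotv (z + a) (z + a).
Proof.
move=> [stat u_ge0 [_ Bxi] compl] [Az Bz].
set d := z - xi; have -> : z + a = d + (xi + a) by rewrite addrA subrK.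
have -> : xi + a = - (\sum_(i < p) u i *: A i + \sum_(j < q) v j *: B j).
  by apply/eqP; rewrite -addr_eq0 addrA stat.
have Bd : dotv (\sum_(j < q) v j *: B j) d = 0.
  rewrite dotv_sumZl big1 // => j _.
  by rewrite dotvC dotvBl !(dotvC _ (B j)) Bz Bxi subrr mulr0.
have Ad : dotv (\sum_(i < p) u i *: A i) d <= 0.
  rewrite dotv_sumZl.
  have -> : \sum_(i < p) u i * dotv (A i) d =
      \sum_(i < p) u i * (dotv (A i) z - b i)
    - \sum_(i < p) u i * (dotv (A i) xi - b i).
    rewrite -sumrB; apply: eq_bigr => i _.
    by rewrite dotvC dotvBl !(dotvC _ (A i)) -mulrBr; congr (_ * _); ring.
  rewrite compl subr0; apply: sumr_le0 => i _; apply: mulr_ge0_le0 => //.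
  by rewrite subr_le0.
rewrite dotv_sqrD [dotv (- _) d]dotvNl (dotvDl (\sum_(i < p) _)) Bd; lra.
Qed.

Lemma qp_kkt_unique xi u v z : qp_kkt xi u v -> lin_feas z ->
  dotv (z + a) (z + a) <= dotv (xi + a) (xi + a) -> z = xi.
Proof.
move=> kkt feas_z le_obj; have := qp_kkt_sqnorm_ge kkt feas_z.
have := dotv_ge0 (z - xi) => ge0 ge; apply/subr0_eq/dotv_eq0; lra.
Qed.

Lemma qp_kkt_dotv xi u v : qp_kkt xi u v ->
  dotv a xi = - dotv xi xi - \sum_(i < p) u i * b i - \sum_(j < q) v j * c j.
Proof.
move=> [stat _ [_ Bxi] compl].
have -> : a = - (xi + \sum_(i < p) u i *: A i + \sum_(j < q) v j *: B j).
  by apply/eqP; rewrite -addr_eq0 !addrA (addrC a xi) stat.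
rewrite dotvNl !dotvDl !dotv_sumZl (eq_bigr (fun j => v j * c j)); last first.
  by move=> j _; rewrite Bxi.
suff -> : \sum_(i < p) u i * dotv (A i) xi = \sum_(i < p) u i * b i by ring.
move/eqP: compl; under eq_bigr do rewrite mulrBr.
by rewrite sumrB subr_eq0 => /eqP.
Qed.

End PolyhedralProjection.

Section SafeGradientFlow.
Variables (R : realType) (n m k : nat).
Variables (f : 'rV[R]_n -> R) (g : 'I_m -> 'rV[R]_n -> R) (h : 'I_k -> 'rV[R]_n -> R).
Variables (alpha : R) (x : 'rV[R]_n).

(* The QP of G_α(x) in the shape of [qp_kkt]; [lin_feas] for these data is
   convertible to [qp_feas g h alpha x]. *)
Notation Galpha_kkt := (qp_kkt (grad f x) (fun i => grad (g i) x)
  (fun i => - alpha * g i x) (fun j => grad (h j) x) (fun j => - alpha * h j x)).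

Lemma Lambda_Galpha_kkt u v : Lambda f g h alpha x u v ->
  exists xi, Galpha_kkt xi u v.
Proof.
move=> [u_ge0 [xi [stat [feas compl]]]]; exists xi; split=> //.
by rewrite -[RHS]compl; apply: eq_bigr => i _; rewrite mulNr opprK.
Qed.

Lemma is_Galpha_kkt Gx xi u v : is_Galpha f g h alpha x Gx ->
  Galpha_kkt xi u v -> Gx = xi.
Proof.
move=> [feas_Gx Gx_min] kkt; have [_ _ feas_xi _] := kkt.
apply: (qp_kkt_unique kkt feas_Gx).
by have := Gx_min _ feas_xi; rewrite /qp_obj ler_pM2l // invr_gt0 ltr0n.
Qed.

Lemma dotv_grad_Galpha Gx u v : is_Galpha f g h alpha x Gx ->
  Lambda f g h alpha x u v ->
  dotv (grad f x) Gx =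
    - dotv Gx Gx + alpha * (\sum_(i < m) u i * g i x)
                 + alpha * (\sum_(j < k) v j * h j x).
Proof.
move=> Gx_def /Lambda_Galpha_kkt [xi kkt]; rewrite (is_Galpha_kkt Gx_def kkt).
rewrite (qp_kkt_dotv kkt) !mulr_sumr -!sumrN.
by congr (_ + _ + _); apply: eq_bigr => i _; rewrite mulNr mulrN opprK mulrCA.
Qed.

Lemma KKT_Galpha_kkt0 : 0 <= alpha -> feasC g h x -> KKT f g h x ->
  exists u v, Galpha_kkt 0 u v.
Proof.
move=> alpha_ge0 [g_le0 h0] [u [v [stat [_ [u_ge0 compl]]]]].
exists u, v; split=> //; first by rewrite add0r.
  split=> [i|j]; last by rewrite dotv0r h0 mulr0.
  by rewrite dotv0r mulNr oppr_ge0 mulr_ge0_le0.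
rewrite -[RHS](mulr0 alpha) -[in RHS]compl mulr_sumr.
by apply: eq_bigr => i _; rewrite dotv0r sub0r mulNr opprK mulrCA.
Qed.

End SafeGradientFlow.

Theorem mainTheorem11 (R : realType) (n m k : nat)
  (f : 'rV[R]_n -> R) (g : 'I_m -> 'rV[R]_n -> R) (h : 'I_k -> 'rV[R]_n -> R)
  (alpha : R) (X : set 'rV[R]_n) :
  0 < alpha ->
  C1 f -> (forall i, C1 (g i)) -> (forall j, C1 (h j)) ->
  open X -> feasC g h `<=` X ->
  (forall y, X y -> Galpha_welldef f g h alpha y) ->
  forall x : 'rV[R]_n, X x ->
  (exists u v, Lambda f g h alpha x u v) ->
  forall Gx : 'rV[R]_n, is_Galpha f g h alpha x Gx ->
  (forall (u : 'I_m -> R) (v : 'I_k -> R), Lambda f g h alpha x u v ->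
     dotv (grad f x) Gx =
       - dotv Gx Gx + alpha * (\sum_(i < m) u i * g i x)
                    + alpha * (\sum_(j < k) v j * h j x)) /\
  (feasC g h x -> MFCQ g h x ->
     dotv (grad f x) Gx <= 0 /\
     (dotv (grad f x) Gx = 0 <-> KKT f g h x)).
Proof.
(* Smoothness, openness of X and MFCQ only serve, in the paper, to make
   G_α well defined and Λ_α(x) nonempty; both are assumed here directly. *)
move=> alpha_gt0 _ _ _ _ _ _ x _ [u [v Luv]] Gx Gx_def.
split=> [u' v'|feas _]; first exact: dotv_grad_Galpha.
have [g_le0 h0] := feas.
have vh0 : \sum_(j < k) v j * h j x = 0.
  by rewrite big1 // => j _; rewrite h0 mulr0.
have := dotv_grad_Galpha Gx_def Luv; rewrite vh0 mulr0 addr0 => E.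
have ug_le0 : \sum_(i < m) u i * g i x <= 0.
  by apply: sumr_le0 => i _; rewrite mulr_ge0_le0 //; case: Luv.
have aug_le0 : alpha * \sum_(i < m) u i * g i x <= 0 by rewrite pmulr_rle0.
have Gx_ge0 := dotv_ge0 Gx.
split; first lra.
split=> [E0|KKTx].
- have Gx0 : Gx = 0 by apply: dotv_eq0; lra.
  have /eqP : alpha * \sum_(i < m) u i * g i x = 0 by lra.
  rewrite mulf_eq0 gt_eqF //= => /eqP ug0.
  have [xi kkt] := Lambda_Galpha_kkt Luv.
  have [stat u_ge0 _ _] := kkt.
  rewrite -(is_Galpha_kkt Gx_def kkt) Gx0 add0r in stat.
  by exists u, v; split; [|split; [|split]].
- have [u' [v' kkt0]] := KKT_Galpha_kkt0 (ltW alpha_gt0) feas KKTx.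
  by rewrite (is_Galpha_kkt Gx_def kkt0) dotv0r.
Qed.
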